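(* Let $S$ be an isolated invariant set for $f$. Suppose $P=(N,L)$ and $P'=(N',L)$ are filtration pairs for $S$ with $N\setminus L\subset N'\setminus L$ and $f(L)\subset\operatorname{Int}L$. Then the pointed space maps $f_P$ and $f_{P'}$ are shift equivalent.
   Context: Let $X$ be a locally compact metric space, $U\subset X$ open and $f:U\to X$ continuous. A solution through $x$ is a map $\sigma:\mathbb Z\to U$ with $\sigma(0)=x$ and $f(\sigma(n))=\sigma(n+1)$ for all $n$; for $N\subset U$, $\operatorname{Inv}N$ is the set of $x\in N$ admitting a solution through $x$ with values in $N$. A compact $N\subset U$ is an isolating neighborhood if $\operatorname{Inv}N\subset\operatorname{Int}N$; $S$ is an isolated invariant set if $S=\operatorname{Inv}N$ for some isolating neighborhood $N$. The exit set is $N^-=\{x\in N:f(x)\notin\operatorname{Int}N\}$. A filtration pair for $S$ is a pair of compact sets $L\subset N$ in the interior of the domain of $f$, each the closure of its interior, with (1) $\operatorname{cl}(N\setminus L)$ an isolating neighborhood and $\operatorname{Inv}\operatorname{cl}(N\setminus L)=S$; (2) $L$ a neighborhood of $N^-$ in $N$; (3) $f(L)\cap\operatorname{cl}(N\setminus L)=\emptyset$. For a filtration pair $P=(N,L)$, $N_L=N/L$ with $L$ collapsed to the base point $[L]$ (if $L=\emptyset$, a disjoint point $[L]$ is adjoined), $p:N\to N_L$ the quotient map, and the pointed space map $f_P:N_L\to N_L$ is $f_P([L])=[L]$, $f_P(p(x))=p(f(x))$ for $x\in N\setminus L$. Base-point preserving maps $F:Y\to Y$, $G:Y'\to Y'$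 are shift equivalent if there exist $m\in\mathbb Z^+$ and continuous base-point preserving $r:Y\to Y'$, $s:Y'\to Y$ with $r\circ F=G\circ r$, $s\circ G=F\circ s$, $s\circ r=F^m$, $r\circ s=G^m$. *)

From HB Require Import structures.
From mathcomp Require Import all_boot all_order all_algebra.
From mathcomp Require Import all_classical all_reals all_analysis.
Set Implicit Arguments. Unset Strict Implicit. Unset Printing Implicit Defensive.
Import Order.TTheory GRing.Theory Num.Theory.
Local Open Scope classical_set_scope.
Local Open Scope ring_scope.

Section Conley.
Variable (T : topologicalType).

(* f : U -> X is represented by a total map f : T -> T, only used on U. *)
Definition is_solution (U : set T) (f : T -> T) (x : T) (sigma : int -> T) : Prop :=
  sigma 0 = x /\ (forall n : int, U (sigma n)) /\
  (forall n : int, f (sigma n) = sigma (n + 1)).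

Definition Inv (U : set T) (f : T -> T) (N : set T) : set T :=
  [set x | N x /\ exists sigma, is_solution U f x sigma /\ forall n, N (sigma n)].

Definition isolating_nbhd (U : set T) (f : T -> T) (N : set T) : Prop :=
  compact N /\ N `<=` U /\ Inv U f N `<=` interior N.

Definition isolated_invariant_set (U : set T) (f : T -> T) (S : set T) : Prop :=
  exists N, isolating_nbhd U f N /\ S = Inv U f N.

Definition exit_set (f : T -> T) (N : set T) : set T :=
  [set x | N x /\ ~ interior N (f x)].

Definition rel_nbhd (N A B : set T) : Prop :=
  exists V, open V /\ B `<=` V /\ V `&` N `<=` A.

Definition filtration_pair (U : set T) (f : T -> T) (S : set T) (N L : set T) : Prop :=
  compact N /\ compact L /\ L `<=` N /\ N `<=` interior U /\
  N = closure (interior N) /\ L = closure (interior L) /\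
  (isolating_nbhd U f (closure (N `\` L)) /\ Inv U f (closure (N `\` L)) = S) /\
  rel_nbhd N L (exit_set f N) /\
  (f @` L) `&` closure (N `\` L) = set0.

(* The pointed space N_L : points of N \ L together with the base point [L]
   (= None).  When L is empty, None is the adjoined disjoint point. *)
Definition pointed (N L : set T) := option {x : T | (N `\` L) x}.

(* quotient map p : N -> N_L (defined on all of T; only used on N) *)
Definition qmap (N L : set T) (x : T) : pointed N L :=
  match pselect ((N `\` L) x) with
  | left h => Some (exist _ x h)
  | right _ => None
  end.

(* quotient topology on N_L : O is open iff p^-1(O) is open in N *)
Definition qopen (N L : set T) (O : set (pointed N L)) : Prop :=
  exists V, open V /\ [set x | N x /\ O (qmap N L x)] = V `&` N.

Definition fP (f : T -> T) (N L : set T) (y : pointed N L) : pointed N L :=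
  match y with
  | None => None
  | Some x => qmap N L (f (proj1_sig x))
  end.
End Conley.

Definition cont_wrt (A B : Type) (openA : set (set A)) (openB : set (set B))
  (g : A -> B) : Prop :=
  forall O, openB O -> openA (g @^-1` O).

Definition shift_equivalent (A B : Type) (openA : set (set A)) (openB : set (set B))
  (a0 : A) (b0 : B) (F : A -> A) (G : B -> B) : Prop :=
  exists (m : nat) (r : A -> B) (s : B -> A),
    (0 < m)%N /\ cont_wrt openA openB r /\ cont_wrt openB openA s /\
    r a0 = b0 /\ s b0 = a0 /\
    r \o F = G \o r /\ s \o G = F \o s /\
    s \o r = iter m F /\ r \o s = iter m G.

From Pilot Require Import Defs.
From HB Require Import structures.
From mathcomp Require Import all_boot all_order all_algebra.
From mathcomp Require Import all_classical all_reals all_analysis.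
From mathcomp Require Import zify.

(* Since f(L) lies in int L, the exit-set condition makes N and N' forward
   invariant, and N \ L ⊂ N' \ L gives N ⊂ N'.  The inclusion (N, L) -> (N', L)
   induces r : N_L -> N'_L.  The key point is that some iterate f^M maps N' into
   N, so that it induces s : N'_L -> N_L; then s ∘ r and r ∘ s are induced by f^M,
   i.e. equal f_P^M and f_P'^M.  If no such M existed, there would be points of
   N' \ L outside N whose orbits stay in N' \ L for m steps into the past and
   the future, for every m; a compactness argument turns them into a full
   solution through a point of cl(N' \ L) lying outside int N.  That point
   belongs to Inv cl(N' \ L) = S ⊂ int N, a contradiction. *)

Set Implicit Arguments.
Unset Strict Implicit.
Unset Printing Implicit Defensive.
Import Order.TTheory GRing.Theory Num.Theory.
Local Open Scope classical_set_scope.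
Local Open Scope ring_scope.

Lemma iter_invariant {T : Type} {f : T -> T} {K : set T} :
  (forall x, K x -> K (f x)) -> forall k x, K x -> K (iter k f x).
Proof. by move=> Kf; elim=> [|k IH] x Kx //=; apply/Kf/IH. Qed.

Lemma full_solution {T : Type} (f : T -> T) (G : set T) :
  (forall z, G z -> G (f z)) -> (forall z, G z -> exists2 w, G w & f w = z) ->
  forall z, G z -> exists sigma : int -> T,
    [/\ sigma 0 = z, forall n, G (sigma n) & forall n, f (sigma n) = sigma (n + 1)].
Proof.
move=> Gf Gpre z Gz.
have [pre preP] : {pre : T -> T & forall y, G y -> G (pre y) /\ f (pre y) = y}.
  apply: (choice (P := fun y w => G y -> G w /\ f w = y)) => y.
  have [/Gpre [w Gw fw]|nGy] := pselect (G y); first by exists w.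
  by exists y => /nGy.
have Gpre_iter := @iter_invariant _ pre G (fun y Gy => (preP y Gy).1).
exists (fun n => if n is Negz k then iter k.+1 pre z else iter `|n|%N f z).
split => //.
- by case=> k; [apply: iter_invariant | apply: Gpre_iter].
- case=> [k|[|k]].
  + by have -> : Posz k + 1 = Posz k.+1 by lia.
  + have -> : Negz 0 + 1 = 0 by lia.
    exact: (preP _ Gz).2.
  + have -> : Negz k.+1 + 1 = Negz k by lia.
    exact: (preP _ (Gpre_iter k.+1 z Gz)).2.
Qed.

Section OrbitSegments.
Context {T : Type} (f : T -> T).

Definition stays_in (A : set T) (n : nat) : set T :=
  [set w | forall k, (k <= n)%N -> A (iter k f w)].

(* Points whose orbit stays in [A] for [m] steps into the past and the future:
   a decreasing sequence of outer approximations of the invariant part of [A]. *)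
Definition Inv_approx (A : set T) (m : nat) : set T := iter m f @` stays_in A m.*2.

Lemma stays_in_le A m n w : (m <= n)%N -> stays_in A n w -> stays_in A m w.
Proof. by move=> mn Aw k km; apply/Aw/(leq_trans km). Qed.

Lemma stays_in_iter A i n w : stays_in A (i + n) w -> stays_in A n (iter i f w).
Proof. by move=> Aw k kn; rewrite -iterD; apply: Aw; lia. Qed.

Lemma Inv_approx_sub A m : Inv_approx A m `<=` A.
Proof. by move=> _ [w Aw <-]; apply: Aw; rewrite -addnn leq_addr. Qed.

Lemma Inv_approx_le A i j : (i <= j)%N -> Inv_approx A j `<=` Inv_approx A i.
Proof.
move=> ij _ [w Aw <-]; exists (iter (j - i) f w); last by rewrite -iterD subnKC.
by apply: stays_in_iter; apply: stays_in_le Aw; rewrite -!addnn; lia.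
Qed.

Lemma Inv_approx_image A m : f @` Inv_approx A m.+1 `<=` Inv_approx A m.
Proof.
move=> _ [_ [w Aw <-] <-]; exists (iter 2 f w); last by rewrite -iterD addn2.
by apply: (@stays_in_iter _ 2); apply: stays_in_le Aw; rewrite -!addnn; lia.
Qed.

Lemma Inv_approx_preimage A m z :
  Inv_approx A m.+1 z -> exists2 w, Inv_approx A m w & f w = z.
Proof.
move=> [w Aw <-]; exists (iter m f w) => //; exists w => //.
by apply: stays_in_le Aw; rewrite -!addnn; lia.
Qed.

Lemma iter_enters (K L C : set T) m :
  (forall x, K x -> K (f x)) -> (forall x, L x -> L (f x)) ->
  (forall x, C x -> C (f x)) -> L `<=` C -> Inv_approx (K `\` L) m `<=` C ->
  forall y, K y -> C (iter m.*2 f y).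
Proof.
move=> Kf Lf Cf LC AC y Ky.
have [|nL] := pselect (L (iter m.*2 f y)); first exact: LC.
have Cm : C (iter m f y).
  apply: AC; exists y => // k km; split; first exact: iter_invariant.
  by move=> Lk; apply: nL; rewrite -(subnK km) iterD; apply: iter_invariant.
by rewrite -addnn iterD; apply: iter_invariant.
Qed.

End OrbitSegments.

Lemma compact_directed_closure (X : topologicalType) (K : set X) (I : Type)
    (J : set I) (D : I -> set X) :
  compact K -> J !=set0 -> (forall i, J i -> D i `<=` K) ->
  (forall i, J i -> D i !=set0) ->
  (forall i j, J i -> J j -> exists2 k, J k & D k `<=` D i `&` D j) ->
  exists2 z, K z & forall i, J i -> closure (D i) z.
Proof.
move=> cK [i0 Ji0] DK Dne Ddir.
have FF : Filter (filter_from J D) by apply: filter_from_filter => //; exists i0.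
have [z [Kz cz]] := cK _ (filter_from_proper FF Dne) (ex_intro2 _ _ i0 Ji0 (DK i0 Ji0)).
exists z => // i Ji B zB.
exact: (cz (D i) B (ex_intro2 _ _ i Ji (fun _ h => h)) zB).
Qed.

Section InvariantPart.
Variables (X : topologicalType) (U : set X) (f : X -> X).
Hypothesis fc : forall x, U x -> {for x, continuous f}.

Lemma iter_continuous (K : set X) : K `<=` U -> (forall x, K x -> K (f x)) ->
  forall k x, K x -> {for x, continuous (iter k f)}.
Proof.
move=> KU Kf; elim=> [|k IH] x Kx; first exact: cvg_id.
by have := continuous_comp (IH x Kx) (fc (KU _ (iter_invariant Kf k Kx))).
Qed.

Variables (A : set X).
Hypotheses (hX : hausdorff_space X) (cA : compact (closure A))
  (AU : closure A `<=` U).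

Definition Inv_limit : set X := [set z | forall m, closure (Inv_approx f A m) z].

Lemma Inv_limit_sub : Inv_limit `<=` closure A.
Proof. by move=> z /(_ 0%N); apply: closureS; apply: Inv_approx_sub. Qed.

Lemma Inv_limit_image z : Inv_limit z -> Inv_limit (f z).
Proof.
move=> Lz m B /(fc (AU (Inv_limit_sub Lz))) /(Lz m.+1) [u [Au Bfu]].
by exists (f u); split => //; apply: Inv_approx_image; exists u.
Qed.

Lemma Inv_limit_preimage z : Inv_limit z -> exists2 w, Inv_limit w & f w = z.
Proof.
move=> Lz.
pose D (p : nat * set X) := Inv_approx f A p.1 `&` f @^-1` p.2.
have [||||w Aw Dw] := @compact_directed_closure X (closure A) _
  [set p | nbhs z p.2] D cA.
- by exists (0%N, setT); apply: filterT.
- by move=> p _ x [Ax _]; apply/subset_closure; move: Ax; apply: Inv_approx_sub.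
- move=> [m V] /= zV; have [y [Ay Vy]] := Lz m.+1 V zV.
  by have [u Au fu] := Inv_approx_preimage Ay; exists u; rewrite /D /= fu.
- move=> [m V] [m' V'] /= zV zV'; exists (maxn m m', V `&` V'); first exact: filterI.
  move=> x [Ax [Vx V'x]]; split; split => //; apply: Inv_approx_le Ax.
    exact: leq_maxl.
  exact: leq_maxr.
exists w; first by move=> m; apply: closureS (Dw (m, setT) filterT) => x [].
apply: hX => B C /(fc (AU Aw)) fwB zC.
have [u [[_ Cfu] Bfu]] := Dw (0%N, C) zC _ fwB.
by exists (f u).
Qed.

Lemma Inv_limit_Inv : Inv_limit `<=` Defs.Inv U f (closure A).
Proof.
move=> z Lz.
have [sigma [s0 Ls fs]] := full_solution Inv_limit_image Inv_limit_preimage Lz.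
split; first exact: Inv_limit_sub.
exists sigma; split; last by move=> n; apply: Inv_limit_sub.
by split => //; split => // n; apply/AU/Inv_limit_sub.
Qed.

Lemma Inv_approx_sub_interior (C : set X) :
  Defs.Inv U f (closure A) `<=` interior C -> exists m, Inv_approx f A m `<=` C.
Proof.
move=> InvC; apply: contrapT => noC.
have [||||z Az Dz] := @compact_directed_closure X (closure A) nat setT
  (fun m => Inv_approx f A m `\` C) cA.
- by exists 0%N.
- by move=> m _ x [Ax _]; apply/subset_closure; move: Ax; apply: Inv_approx_sub.
- move=> m _; apply: contrapT => nD; apply: noC; exists m => x Ax.
  by apply: contrapT => nCx; apply: nD; exists x.
- move=> i j _ _; exists (maxn i j) => // x [Ax nCx]; split; split => //.
    by apply: Inv_approx_le Ax; apply: leq_maxl.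
  by apply: Inv_approx_le Ax; apply: leq_maxr.
have Lz : Inv_limit z by move=> m; apply: closureS (Dz m I) => x [].
by have [x [[_ nCx] Cx]] := Dz 0%N I _ (InvC _ (Inv_limit_Inv Lz)).
Qed.

End InvariantPart.

Definition pair_map {T : Type} (N L N' L' : set T) (h : T -> T) :=
  (forall x, N x -> N' (h x)) /\ (forall x, N x -> L x -> L' (h x)).

Definition induced_map {T : topologicalType} (N L N' L' : set T) (h : T -> T)
  (y : pointed N L) : pointed N' L' :=
  if y is Some x then qmap N' L' (h (proj1_sig x)) else None.
Arguments induced_map {T} N L N' L' h y.

Section PointedMaps.
Variable T : topologicalType.
Implicit Types (N L : set T) (h : T -> T).

Lemma qmap_Some N L x (NLx : (N `\` L) x) : qmap N L x = Some (exist _ x NLx).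
Proof.
rewrite /qmap; case: pselect => [NLx'|//].
by rewrite (Prop_irrelevance NLx NLx').
Qed.

Lemma qmap_None N L x : ~ (N `\` L) x -> qmap N L x = None.
Proof. by rewrite /qmap; case: pselect. Qed.

Lemma qmap_val N L (x : {x | (N `\` L) x}) : qmap N L (proj1_sig x) = Some x.
Proof. by case: x => x NLx; rewrite qmap_Some. Qed.

Lemma fP_induced_map f N L : @fP _ f N L = induced_map N L N L f.
Proof. by []. Qed.

Lemma pair_map_comp N L N' L' N'' L'' h h' :
  pair_map N L N' L' h -> pair_map N' L' N'' L'' h' ->
  pair_map N L N'' L'' (h' \o h).
Proof.
move=> [hN hL] [h'N h'L]; split=> x Nx /=; first exact/h'N/hN.
by move=> Lx; apply: h'L; [apply: hN | apply: hL].
Qed.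

Lemma pair_map_iter N L h : pair_map N L N L h -> forall k, pair_map N L N L (iter k h).
Proof.
move=> hP; elim=> [|k IH]; first by split.
exact: (pair_map_comp IH hP).
Qed.

Lemma induced_map_qmap N L N' L' h z : pair_map N L N' L' h -> N z ->
  induced_map N L N' L' h (qmap N L z) = qmap N' L' (h z).
Proof.
move=> [_ hL] Nz; have [NLz|nNLz] := pselect ((N `\` L) z).
  by rewrite (qmap_Some NLz).
rewrite (qmap_None nNLz); symmetry; apply: qmap_None => -[_]; apply.
by apply: hL => //; apply: contrapT => nLz; apply: nNLz.
Qed.

Lemma induced_map_id N L : induced_map N L N L id = id.
Proof. by apply: funext => -[x|] //=; rewrite qmap_val. Qed.

Lemma induced_map_comp N L N' L' N'' L'' h h' :
  pair_map N L N' L' h -> pair_map N' L' N'' L'' h' ->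
  induced_map N' L' N'' L'' h' \o induced_map N L N' L' h =
  induced_map N L N'' L'' (h' \o h).
Proof.
move=> [hN _] h'P; apply: funext => -[[x [Nx _]]|] //=.
by rewrite induced_map_qmap //; apply: hN.
Qed.

Lemma iter_induced_map N L h : pair_map N L N L h ->
  forall k, iter k (induced_map N L N L h) = induced_map N L N L (iter k h).
Proof.
move=> hP; elim=> [|k IH]; first by rewrite -[iter 0 h]/id induced_map_id.
transitivity (induced_map N L N L h \o iter k (induced_map N L N L h)) => //.
by rewrite IH induced_map_comp //; apply: pair_map_iter.
Qed.

Lemma induced_map_continuous N L N' L' h : pair_map N L N' L' h ->
  (forall x, N x -> {for x, continuous h}) ->
  cont_wrt (@qopen _ N L) (@qopen _ N' L') (induced_map N L N' L' h).
Proof.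
move=> hP hc O [V [oV OV]]; exists (interior (h @^-1` V)).
split; first exact: open_interior.
apply/seteqP; split => x /=.
- move=> [Nx]; rewrite /preimage /= induced_map_qmap // => Ox.
  have [Vhx _] : (V `&` N') (h x) by rewrite -OV; split => //; apply: hP.1.
  by split => //; apply: (hc x Nx); apply: open_nbhs_nbhs.
- move=> [Ix Nx]; split => //; rewrite /preimage /= induced_map_qmap //.
  have : (V `&` N') (h x) by split; [exact: interior_subset Ix | apply: hP.1].
  by rewrite -OV => -[].
Qed.

Lemma induced_map_shift_equivalent N L N' L' F F' r s M : (0 < M)%N ->
  pair_map N L N L F -> pair_map N' L' N' L' F' ->
  pair_map N L N' L' r -> pair_map N' L' N L s ->
  (forall x, N x -> {for x, continuous r}) -> (forall x, N' x -> {for x, continuous s}) ->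
  r \o F = F' \o r -> s \o F' = F \o s -> s \o r = iter M F -> r \o s = iter M F' ->
  shift_equivalent (@qopen _ N L) (@qopen _ N' L') None None
    (induced_map N L N L F) (induced_map N' L' N' L' F').
Proof.
move=> M_gt0 FP F'P rP sP rc sc rF sF' sr rs.
exists M, (induced_map N L N' L' r), (induced_map N' L' N L s).
do 2!split=> //; first exact: induced_map_continuous.
split; first exact: induced_map_continuous.
do 2!split=> //; rewrite !iter_induced_map // !induced_map_comp //.
by rewrite rF sF' sr rs.
Qed.

End PointedMaps.

Section FiltrationPairs.
Variables (X : topologicalType) (U : set X) (f : X -> X) (S N L : set X).
Hypothesis hP : filtration_pair U f S N L.

Lemma filtration_pair_map : (forall x, L x -> L (f x)) -> pair_map N L N L f.
Proof.
have [_ [_ [LN [_ [_ [_ [_ [[V [_ [exV VL]]] _]]]]]]]] := hP.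
move=> Lf; split=> [x Nx|x _ /Lf //].
have [Lx|nLx] := pselect (L x); first exact/LN/Lf.
apply: contrapT => nNfx; apply: nLx; apply: VL; split => //; apply: exV.
by split => // /interior_subset.
Qed.

Lemma filtration_pair_Inv_sub : S `<=` interior N.
Proof.
have [_ [_ [_ [_ [clN [_ [[[_ [_ isoN]] <-] _]]]]]]] := hP.
have cN : closed N by rewrite clN; exact: closed_closure.
apply: subset_trans isoN _; apply: interiorS.
by rewrite {2}(closure_id N).1 //; apply: closureS; apply: subDsetl.
Qed.

End FiltrationPairs.

Theorem mainTheorem19 (R : realType) (X : pseudoMetricType R)
  (hX : hausdorff_space X) (lcX : locally_compact [set: X])
  (U : set X) (f : X -> X) (oU : open U) (cf : {within U, continuous f})
  (S N N' L : set X)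
  (hS : isolated_invariant_set U f S)
  (hP : filtration_pair U f S N L) (hP' : filtration_pair U f S N' L)
  (hsub : N `\` L `<=` N' `\` L)
  (hfL : f @` L `<=` interior L) :
  shift_equivalent (@qopen X N L) (@qopen X N' L) None None
    (@fP X f N L) (@fP X f N' L).
Proof.
have fc : forall x, U x -> {for x, continuous f}.
  by move: cf; rewrite continuous_open_subspace // => cf x Ux; apply: cf; rewrite inE.
have Lf : forall x, L x -> L (f x).
  by move=> x Lx; apply: interior_subset; apply: hfL; exists x.
have [fN fN'] := (filtration_pair_map hP Lf, filtration_pair_map hP' Lf).
have [_ [_ [LN _]]] := hP; have [_ [_ [LN' [N'U [_ [_ [[[cA [AU _]] SN'] _]]]]]]] := hP'.
have {}N'U : N' `<=` U by move=> x /N'U /interior_subset.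
have [m Am] : exists m, Inv_approx f (N' `\` L) m `<=` N.
  apply: (Inv_approx_sub_interior fc hX cA AU); rewrite SN'.
  exact: filtration_pair_Inv_sub hP.
pose M := (m.+1).*2. (* rather than m.*2, which may vanish *)
have fMP : pair_map N' L N L (iter M f).
  split=> [|x _ Lx]; last exact: iter_invariant.
  apply: iter_enters fN'.1 Lf fN.1 LN _.
  by apply: subset_trans Am; apply: Inv_approx_le.
rewrite !fP_induced_map.
apply: (induced_map_shift_equivalent (r := id) (M := M) _ fN fN' _ fMP) => //.
- split=> // x Nx; have [/LN'//|nLx] := pselect (L x).
  by have [] := hsub x (conj Nx nLx).
- by move=> x _; exact: cvg_id.
- by move=> x N'x; apply: (iter_continuous fc N'U fN'.1 N'x).
- by apply: funext => x /=; rewrite -iterSr.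
Qed.
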